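(* Let $\mathbf{r}:=(r_1,\ldots,r_k)$ be a $k$-tuple of elements of $\mathcal{B}$. There exists: (i) a formula $\theta_{\mathbf{r}}(u_1,\ldots,u_k)$ of $\{\exists,\forall,\wedge,\vee,=\}$-FO such that $(\mathcal{B}, r'_1,\ldots, r'_k) \models \theta_{\mathbf{r}}(u_1,\ldots,u_k)$ iff there is an automorphism from $(\mathcal{B}, r_1,\ldots, r_k)$ to $(\mathcal{B}, r'_1,\ldots, r'_k)$; (ii) a formula $\theta_{\mathbf{r}}(u_1,\ldots,u_k)$ of $\{\exists,\forall,\wedge,\vee\}$-FO such that $(\mathcal{B}, r'_1,\ldots, r'_k) \models \theta_{\mathbf{r}}(u_1,\ldots,u_k)$ iff there is a she from $(\mathcal{B}, r_1,\ldots, r_k)$ to $(\mathcal{B}, r'_1,\ldots, r'_k)$.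
   Context: $\mathcal{B}$ is a finite structure with domain $B$ over a finite relational signature. $\{\exists,\forall,\wedge,\vee\}$-FO (resp. $\{\exists,\forall,\wedge,\vee,=\}$-FO) is the positive fragment of first-order logic without (resp. with) equality. A hyper-operation on $B$ is a function $f:B\to\mathfrak{P}(B)\setminus\{\emptyset\}$; it is surjective if every $y\in B$ lies in some $f(x)$. A surjective hyper-endomorphism (she) of $\mathcal{B}$ is a surjective hyper-operation $f$ such that for every extensional relation $R$, if $\mathcal{B}\models R(x_1,\ldots,x_i)$ then $\mathcal{B}\models R(y_1,\ldots,y_i)$ for all $y_j\in f(x_j)$. $f$ is a she from $(\mathcal{B},r_1,\ldots,r_k)$ to $(\mathcal{B},r'_1,\ldots,r'_k)$ if $f$ is a she of $\mathcal{B}$ and $r'_j\in f(r_j)$ for all $j$. *)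

From mathcomp Require Import all_boot.
Set Implicit Arguments. Unset Strict Implicit. Unset Printing Implicit Defensive.

Definition interpretation (S : finType) (ar : S -> nat) (B : finType) :=
  forall s : S, pred ((ar s).-tuple B).

Inductive pformula (S : finType) (ar : S -> nat) : Type :=
| PTrue
| PFalse
| PRel (s : S) (args : (ar s).-tuple nat)
| PEq (x y : nat)
| PAnd (f g : pformula ar)
| POr (f g : pformula ar)
| PEx (x : nat) (f : pformula ar)
| PAll (x : nat) (f : pformula ar).

Arguments PTrue {S ar}.
Arguments PFalse {S ar}.

Fixpoint eq_free (S : finType) (ar : S -> nat) (f : pformula ar) : bool :=
  match f with
  | PEq _ _ => false
  | PAnd g h | POr g h => eq_free g && eq_free h
  | PEx _ g | PAll _ g => eq_free g
  | _ => true
  end.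

Definition upd (B : Type) (env : nat -> B) (x : nat) (b : B) : nat -> B :=
  fun y => if y == x then b else env y.

Fixpoint sat (S : finType) (ar : S -> nat) (B : finType) (I : interpretation ar B)
    (env : nat -> B) (f : pformula ar) : Prop :=
  match f with
  | PTrue => True
  | PFalse => False
  | PRel s args => I s (map_tuple env args)
  | PEq x y => env x = env y
  | PAnd g h => sat I env g /\ sat I env h
  | POr g h => sat I env g \/ sat I env h
  | PEx x g => exists b : B, sat I (upd env x b) g
  | PAll x g => forall b : B, sat I (upd env x b) g
  end.

Definition auto_from (S : finType) (ar : S -> nat) (B : finType) (I : interpretation ar B)
    (k : nat) (r r' : 'I_k -> B) : Prop :=
  exists f : B -> B,
    [/\ bijective f,
        (forall (s : S) (t : (ar s).-tuple B), I s t = I s (map_tuple f t))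
      & forall j : 'I_k, f (r j) = r' j].

(* surjective hyper-endomorphism *)
Definition is_she (S : finType) (ar : S -> nat) (B : finType) (I : interpretation ar B)
    (f : B -> {set B}) : Prop :=
  [/\ forall x, f x != set0,
      forall y, exists x, y \in f x
    & forall (s : S) (t t' : (ar s).-tuple B),
        I s t -> (forall j, tnth t' j \in f (tnth t j)) -> I s t'].

Definition she_from (S : finType) (ar : S -> nat) (B : finType) (I : interpretation ar B)
    (k : nat) (r r' : 'I_k -> B) : Prop :=
  exists f : B -> {set B}, is_she I f /\ forall j : 'I_k, r' j \in f (r j).

From Stdlib Require Import Setoid.
From mathcomp Require Import all_boot.
Set Implicit Arguments. Unset Strict Implicit. Unset Printing Implicit Defensive.

(* An automorphism of the finite structure B sending r to r' is the same as a surjective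
   endomorphism h with h r_j = r'_j: a surjection of a finite set is a bijection, and an
   injective relation-preserving map of the finite set of tuples also reflects relations.
   Since B is finite, h can be described by one existential variable w_b per element b:
   all atoms true in B hold of the w's, u_j = w_(r_j), and every element equals some w_b.
   Without equality, the she is described positively instead: for all z_b (b in B) there
   is a map tau : B -> B (a finite disjunction) and there are w_c such that every atom
   true of (t_1, ..., t_n) holds of each tuple of variables whose i-th entry is w_(t_i),
   some u_j with r_j = t_i, or some z_b with tau b = t_i.  The values of the variables
   attached to c form the image set of c under a she, and conversely a she provides tau
   (preimages of the z's) and the w's (elements of the image sets). *)

Lemma finite_inj_homo_mono (T : finType) (g : T -> T) (P : pred T) :
  injective g -> {homo g : x / P x} -> {mono g : x / P x}.
Proof.
move=> ginj gP x; apply/idP/idP => [Pgx|]; last exact: gP.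
pose A := [set y | P y].
have gA : g @: A = A.
  apply/eqP; rewrite eqEcard card_imset // leqnn andbT.
  by apply/subsetP => _ /imsetP[y Py ->]; rewrite !inE gP // -[P y]inE.
have : g x \in g @: A by rewrite gA inE.
by rewrite mem_imset // inE.
Qed.

Lemma fin_surj_bij (T : finType) (h : T -> T) :
  (forall y, exists x, h x = y) -> bijective h.
Proof.
move=> /fin_all_exists[g hg].
by apply: (bij_can_bij _ hg); apply: injF_bij; exact: can_inj hg.
Qed.

Section Formulas.
Variables (S : finType) (ar : S -> nat).

Definition bigAnd (X : eqType) (xs : seq X) (F : X -> pformula ar) : pformula ar :=
  foldr (fun x => PAnd (F x)) PTrue xs.
Definition bigOr (X : eqType) (xs : seq X) (F : X -> pformula ar) : pformula ar :=
  foldr (fun x => POr (F x)) PFalse xs.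

Definition PExs (X : finType) (v : X -> nat) (f : pformula ar) : pformula ar :=
  foldr (@PEx S ar) f [seq v x | x <- enum X].
Definition PAlls (X : finType) (v : X -> nat) (f : pformula ar) : pformula ar :=
  foldr (@PAll S ar) f [seq v x | x <- enum X].

Lemma eq_free_bigAnd (X : eqType) (xs : seq X) (F : X -> pformula ar) :
  (forall x, eq_free (F x)) -> eq_free (bigAnd xs F).
Proof. by move=> F_ef; elim: xs => //= x xs ->; rewrite F_ef. Qed.

Lemma eq_free_bigOr (X : eqType) (xs : seq X) (F : X -> pformula ar) :
  (forall x, eq_free (F x)) -> eq_free (bigOr xs F).
Proof. by move=> F_ef; elim: xs => //= x xs ->; rewrite F_ef. Qed.

Lemma eq_free_PExs (X : finType) (v : X -> nat) f : eq_free (PExs v f) = eq_free f.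
Proof. by rewrite /PExs; elim: [seq v x | x <- enum X]. Qed.

Lemma eq_free_PAlls (X : finType) (v : X -> nat) f : eq_free (PAlls v f) = eq_free f.
Proof. by rewrite /PAlls; elim: [seq v x | x <- enum X]. Qed.

Variables (B : finType) (I : interpretation ar B).
(* Otherwise [s] would be implicit in [I s t], being inferable from [t]. *)
Arguments I : clear implicits.

Lemma eq_sat env1 env2 f : env1 =1 env2 -> sat I env1 f <-> sat I env2 f.
Proof.
elim: f env1 env2 => /= [||s args|x y|f IHf g IHg|f IHf g IHg|x f IHf|x f IHf]
  env1 env2 E //.
- by rewrite (_ : map_tuple env1 args = map_tuple env2 args) //; apply/val_inj/eq_map.
- by rewrite !E.
- by move: (IHf _ _ E) (IHg _ _ E); tauto.
- by move: (IHf _ _ E) (IHg _ _ E); tauto.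
- have Eu b : upd env1 x b =1 upd env2 x b by move=> y; rewrite /upd E.
  by split=> -[b H]; exists b; apply/(IHf _ _ (Eu b)).
- have Eu b : upd env1 x b =1 upd env2 x b by move=> y; rewrite /upd E.
  by split=> H b; apply/(IHf _ _ (Eu b)); apply: H.
Qed.

Lemma sat_bigAnd env (X : eqType) (xs : seq X) (F : X -> pformula ar) :
  sat I env (bigAnd xs F) <-> forall x, x \in xs -> sat I env (F x).
Proof.
elim: xs => [|x xs IH] /=; first by [].
rewrite IH; split=> [[Fx Fxs] y|Fxs]; last by split=> [|y xs_y];
  apply: Fxs; rewrite inE ?eqxx ?xs_y ?orbT.
by rewrite inE => /orP[/eqP->|]; [exact: Fx | exact: Fxs].
Qed.

Lemma sat_bigOr env (X : eqType) (xs : seq X) (F : X -> pformula ar) :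
  sat I env (bigOr xs F) <-> exists2 x, x \in xs & sat I env (F x).
Proof.
elim: xs => [|x xs IH] /=; first by split=> // -[].
rewrite IH; split=> [[Fx|[y xs_y Fy]]|[y]]; first by exists x; rewrite ?mem_head.
  by exists y; rewrite // inE xs_y orbT.
by rewrite inE => /orP[/eqP->|xs_y Fy]; [left | right; exists y].
Qed.

Lemma sat_foldr_PEx env (vs : seq nat) f :
  sat I env (foldr (@PEx S ar) f vs) <->
  exists2 env', (forall y, y \notin vs -> env' y = env y) & sat I env' f.
Proof.
elim: vs env => [|v vs IH] env /=.
  split=> [f_env|[env' env'E]]; first by exists env.
  by apply: (eq_sat _ _).1 => y; rewrite env'E.
split=> [[b /IH[env' env'E f_env']]|[env' env'E f_env']].
  exists env' => // y; rewrite inE negb_or => /andP[/negbTE yv y_vs].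
  by rewrite env'E // /upd yv.
exists (env' v); apply/IH; exists env' => // y y_vs; rewrite /upd.
by case: eqP => [->|/eqP yv] //; rewrite env'E // inE negb_or yv.
Qed.

Lemma sat_foldr_PAll env (vs : seq nat) f :
  sat I env (foldr (@PAll S ar) f vs) <->
  forall env', (forall y, y \notin vs -> env' y = env y) -> sat I env' f.
Proof.
elim: vs env => [|v vs IH] env /=.
  split=> [f_env env' env'E|]; last by apply.
  by apply: (eq_sat _ _).1 f_env => y; rewrite env'E.
split=> [f_upd env' env'E|f_env' b].
  apply: (IH _).1 (f_upd (env' v)) _ _ => y y_vs; rewrite /upd.
  by case: eqP => [->|/eqP yv] //; rewrite env'E // inE negb_or yv.
apply/IH => env' env'E; apply: f_env' => y; rewrite inE negb_or.
by case/andP=> /negbTE yv y_vs; rewrite env'E // /upd yv.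
Qed.

Definition env_with (X : finType) (v : X -> nat) (g : X -> B) (env : nat -> B) :
    nat -> B :=
  fun y => if [pick x | v x == y] is Some x then g x else env y.

Lemma env_with_in (X : finType) (v : X -> nat) g env x :
  injective v -> env_with v g env (v x) = g x.
Proof.
by move=> v_inj; rewrite /env_with; case: pickP => [x' /eqP/v_inj->|/(_ x)/eqP].
Qed.

Lemma env_with_out (X : finType) (v : X -> nat) g env y :
  (forall x, v x != y) -> env_with v g env y = env y.
Proof.
by move=> vy; rewrite /env_with; case: pickP => // x; rewrite (negbTE (vy x)).
Qed.

Lemma env_with_notin (X : finType) (v : X -> nat) g env y :
  y \notin [seq v x | x <- enum X] -> env_with v g env y = env y.
Proof.
move=> y_v; apply: env_with_out => x.
by apply: contraNneq y_v => <-; rewrite map_f ?mem_enum.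
Qed.

Lemma env_with_comp (X : finType) (v : X -> nat) env env' :
  (forall y, y \notin [seq v x | x <- enum X] -> env' y = env y) ->
  env_with v (env' \o v) env =1 env'.
Proof.
move=> env'E y; rewrite /env_with; case: pickP => [x /eqP<- //|v_y].
by apply/esym/env'E/mapP => -[x _ yx]; move: (v_y x); rewrite yx eqxx.
Qed.

Lemma sat_PExs (X : finType) (v : X -> nat) env f : injective v ->
  sat I env (PExs v f) <-> exists g : X -> B, sat I (env_with v g env) f.
Proof.
move=> v_inj; rewrite sat_foldr_PEx.
split=> [[env' /env_with_comp env'E f_env']|[g f_g]].
  by exists (env' \o v); apply: (eq_sat _ _).1 f_env' => y; rewrite env'E.
by exists (env_with v g env) => // y /env_with_notin.
Qed.

Lemma sat_PAlls (X : finType) (v : X -> nat) env f : injective v ->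
  sat I env (PAlls v f) <-> forall g : X -> B, sat I (env_with v g env) f.
Proof.
move=> v_inj; rewrite sat_foldr_PAll.
split=> [f_env' g|f_g env' /env_with_comp env'E].
  by apply: f_env' => y /env_with_notin.
exact: (eq_sat _ env'E).1 (f_g (env' \o v)).
Qed.

(* For [lab = id] this says that [val] is an endomorphism. *)
Definition preserves (X : finType) (lab val : X -> B) : Prop :=
  forall s (y : (ar s).-tuple X), I s (map_tuple lab y) -> I s (map_tuple val y).

Definition pdiag (X : finType) (lab : X -> B) (var : X -> nat) : pformula ar :=
  bigAnd (enum S) (fun s =>
    bigAnd (enum [pred y : (ar s).-tuple X | I s (map_tuple lab y)])
      (fun y => PRel (map_tuple var y))).

Lemma eq_free_pdiag (X : finType) (lab : X -> B) (var : X -> nat) :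
  eq_free (pdiag lab var).
Proof. by do 2![apply: eq_free_bigAnd => ?]. Qed.

Lemma sat_pdiag (X : finType) (lab val : X -> B) (var : X -> nat) env :
  (forall x, env (var x) = val x) ->
  sat I env (pdiag lab var) <-> preserves lab val.
Proof.
move=> envE; have valE s (y : (ar s).-tuple X) :
    map_tuple env (map_tuple var y) = map_tuple val y.
  by apply: eq_from_tnth => j; rewrite !tnth_map envE.
rewrite sat_bigAnd; split=> [diag s y lab_y|pres s _].
  by have /sat_bigAnd/(_ y) := diag s (mem_enum _ s); rewrite /= -valE mem_enum; apply.
by apply/sat_bigAnd => y; rewrite mem_enum /= valE; apply: pres.
Qed.

End Formulas.

Lemma auto_from_surj_endo (S : finType) (ar : S -> nat) (B : finType)
    (I : interpretation ar B) (k : nat) (r r' : 'I_k -> B) :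
  auto_from I r r' <->
  exists h : B -> B,
    [/\ preserves I id h, forall y, exists x, h x = y & forall j, h (r j) = r' j].
Proof.
have map_id_tuple n (t : n.-tuple B) : map_tuple id t = t by apply/val_inj/map_id.
split=> [[h [[g hg gh] hI hr]]|[h [h_endo h_surj hr]]].
  exists h; split=> // [s t|y]; last by exists (g y).
  by rewrite map_id_tuple hI.
have h_bij := fin_surj_bij h_surj; exists h; split=> // s t.
have map_h_inj : injective (fun t : (ar s).-tuple B => map_tuple h t).
  by move=> t1 t2 /(congr1 val)/(inj_map (bij_inj h_bij))/val_inj.
apply/esym/(finite_inj_homo_mono map_h_inj) => {}t.
by have := h_endo s t; rewrite map_id_tuple.
Qed.

Section SheTags.
Variables (S : finType) (ar : S -> nat) (B : finType) (I : interpretation ar B).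
Variables (k : nat) (r : 'I_k -> B).

(* [inl (inl c)], [inl (inr j)] and [inr b] stand for the variables w_c, u_j and z_b
   of the she-formula; [owner] is the element whose image set the variable must lie in. *)
Definition tag := (B + 'I_k + B)%type.

Definition owner (tau : {ffun B -> B}) (x : tag) : B :=
  match x with inl (inl c) => c | inl (inr j) => r j | inr b => tau b end.

Definition value (w : B -> B) (r' : 'I_k -> B) (g : B -> B) (x : tag) : B :=
  match x with inl (inl c) => w c | inl (inr j) => r' j | inr b => g b end.

Lemma she_fromP (r' : 'I_k -> B) :
  she_from I r r' <->
  forall g : B -> B, exists (tau : {ffun B -> B}) (w : B -> B),
    preserves I (owner tau) (value w r' g).
Proof.
split=> [[F [[F_ne F_surj F_pres] Fr]] g|tagged].
  have [tau tauP] : exists tau : {ffun B -> B}, forall b, g b \in F (tau b).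
    have [tau tauP] := fin_all_exists (fun b => F_surj (g b)).
    by exists (finfun tau) => b; rewrite ffunE.
  have [w wP] : exists w : B -> B, forall c, w c \in F c.
    have ex_w c : exists x, x \in F c by apply/set0Pn/F_ne.
    exact: fin_all_exists ex_w.
  have valP x : value w r' g x \in F (owner tau x) by case: x => [[c|j]|b] /=.
  by exists tau, w => s y lab_y; apply: F_pres lab_y _ => j; rewrite !tnth_map.
have [tau [w pres]] := tagged id.
pose F c := value w r' id @: (owner tau @^-1: [set c]).
have F_val x : value w r' id x \in F (owner tau x) by rewrite imset_f // inE in_set1.
exists F; split; last by move=> j; exact: (F_val (inl (inr j))).
split=> [c|b|s t t' It t'F].
- by apply/set0Pn; exists (w c); exact: (F_val (inl (inl c))).
- by exists (tau b); exact: (F_val (inr b)).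
have /fin_all_exists[x xP] j :
    exists x, owner tau x = tnth t j /\ value w r' id x = tnth t' j.
  by case/imsetP: (t'F j) => x; rewrite inE in_set1 => /eqP ? ->; exists x.
pose y := [tuple x j | j < ar s].
have map_y (f : tag -> B) (u : (ar s).-tuple B) :
    (forall j, f (x j) = tnth u j) -> map_tuple f y = u.
  by move=> fx; apply: eq_from_tnth => j; rewrite tnth_map tnth_mktuple fx.
rewrite -(map_y (value w r' id) t') => [|j]; last by case: (xP j).
by apply: pres; rewrite (map_y _ t) // => j; case: (xP j).
Qed.

End SheTags.

Section DefiningFormulas.
Variables (S : finType) (ar : S -> nat) (B : finType) (I : interpretation ar B).
Variables (k : nat) (r : 'I_k -> B).

(* Variable layout: u_j is [j < k], w_b is [wv b], z_b is [zv b], and [cover] is fresh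
   for the automorphism formula. *)
Definition wv (b : B) : nat := k + enum_rank b.
Definition zv (b : B) : nat := k + #|B| + enum_rank b.
Definition cover : nat := k + #|B|.

Lemma wv_inj : injective wv.
Proof. by move=> b1 b2 /addnI/ord_inj/enum_rank_inj. Qed.

Lemma zv_inj : injective zv.
Proof. by move=> b1 b2 /addnI/ord_inj/enum_rank_inj. Qed.

Lemma wv_neq_ord b (j : 'I_k) : wv b != j.
Proof. by rewrite gtn_eqF // (leq_trans (ltn_ord j)) ?leq_addr. Qed.

Lemma zv_neq_ord b (j : 'I_k) : zv b != j.
Proof. by rewrite gtn_eqF // (leq_trans (ltn_ord j)) // /zv -addnA leq_addr. Qed.

Lemma wv_neq_zv b c : wv b != zv c.
Proof.
by rewrite ltn_eqF // /wv /zv -addnA ltn_add2l (leq_trans (ltn_ord _)) ?leq_addr.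
Qed.

Lemma wv_neq_cover b : wv b != cover.
Proof. by rewrite ltn_eqF // ltn_add2l. Qed.

Definition theta_auto : pformula ar :=
  PExs wv (PAnd (pdiag I id wv)
    (PAnd (PAll cover (bigOr (enum B) (fun b => PEq ar cover (wv b))))
          (bigAnd (enum 'I_k) (fun j => PEq ar j (wv (r j)))))).

Definition she_var (x : tag B k) : nat :=
  match x with inl (inl c) => wv c | inl (inr j) => j | inr b => zv b end.

Definition theta_she : pformula ar :=
  PAlls zv (bigOr (enum {ffun B -> B})
    (fun tau => PExs wv (pdiag I (owner r tau) she_var))).

Lemma eq_free_theta_she : eq_free theta_she.
Proof.
rewrite eq_free_PAlls; apply: eq_free_bigOr => tau.
by rewrite eq_free_PExs eq_free_pdiag.
Qed.

Variables (r' : 'I_k -> B) (env : nat -> B).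
Hypothesis envE : forall j : 'I_k, env j = r' j.

Lemma sat_theta_auto :
  sat I env theta_auto <->
  exists h : B -> B,
    [/\ preserves I id h, forall y, exists x, h x = y & forall j, h (r j) = r' j].
Proof.
have envW h b : env_with wv h env (wv b) = h b by apply/env_with_in/wv_inj.
have envJ h (j : 'I_k) : env_with wv h env j = r' j.
  by rewrite env_with_out // => b; exact: wv_neq_ord.
rewrite sat_PExs; last exact: wv_inj.
apply: Morphisms_Prop.ex_iff_morphism => h /=; rewrite (sat_pdiag _ _ (envW h)).
have updW a b : upd (env_with wv h env) cover a (wv b) = h b.
  by rewrite /upd (negbTE (wv_neq_cover b)) envW.
split=> [[pres [cov anch]]|[pres surj anch]].
  split=> // [y|j].
    by have /sat_bigOr[b _] := cov y; rewrite /= updW {1}/upd eqxx; exists b.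
  by have /sat_bigAnd/(_ j (mem_enum _ j)) := anch; rewrite /= envJ envW.
split=> //; split=> [y|].
  have [b hb] := surj y; apply/sat_bigOr; exists b; first exact: mem_enum.
  by rewrite /= updW {1}/upd eqxx.
by apply/sat_bigAnd => j _ /=; rewrite envJ envW anch.
Qed.

Lemma sat_theta_she :
  sat I env theta_she <->
  forall g : B -> B, exists (tau : {ffun B -> B}) (w : B -> B),
    preserves I (owner r tau) (value w r' g).
Proof.
rewrite sat_PAlls; last exact: zv_inj.
apply: Morphisms_Prop.all_iff_morphism => g; rewrite sat_bigOr.
have envV w x : env_with wv w (env_with zv g env) (she_var x) = value w r' g x.
  case: x => [[c|j]|b] /=; first exact/env_with_in/wv_inj.
    by rewrite !env_with_out // => b; [exact: zv_neq_ord | exact: wv_neq_ord].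
  by rewrite env_with_out ?env_with_in //; [exact: zv_inj | move=> c; exact: wv_neq_zv].
split=> [[tau _ /sat_PExs[|w]]|[tau [w pres]]]; first exact: wv_inj.
  by rewrite (sat_pdiag _ _ (envV w)); exists tau, w.
exists tau; first exact: mem_enum.
by apply/sat_PExs; [exact: wv_inj | exists w; apply/(sat_pdiag _ _ (envV w))].
Qed.

End DefiningFormulas.

Theorem lemma2p1 (S : finType) (ar : S -> nat) (B : finType) (I : interpretation ar B)
    (k : nat) (r : 'I_k -> B) :
  (exists theta : pformula ar,
     forall (r' : 'I_k -> B) (env : nat -> B),
       (forall j : 'I_k, env j = r' j) ->
       (sat I env theta <-> auto_from I r r'))
  /\
  (exists theta : pformula ar,
     eq_free theta /\
     forall (r' : 'I_k -> B) (env : nat -> B),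
       (forall j : 'I_k, env j = r' j) ->
       (sat I env theta <-> she_from I r r')).
Proof.
split.
  exists (theta_auto I r) => r' env envE.
  by rewrite sat_theta_auto // auto_from_surj_endo.
exists (theta_she I r); split=> [|r' env envE]; first exact: eq_free_theta_she.
by rewrite sat_theta_she // she_fromP.
Qed.
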